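(* Let $d\geq 1$, let $p_1<\dots<p_d$ be the first $d$ prime numbers, let $N\geq 1$ be an integer, let $C>1$ and $\varepsilon\in\mathbb{R}$. Let $\mathbf{S}_1$ be the $(d+1)\times d$ matrix whose $i$-th column has entry $\ln p_i$ in row $i$, entry $C\ln p_i$ in row $d+1$ and zeros elsewhere, and let $\mathbf{t}=(0,\dots,0,C\ln N)^T$. Let $\mathbf{z}\in\mathbb{Z}^d$, put $$u=\prod_{1\le i\le d,\ z_i>0}p_i^{z_i},\qquad k=\prod_{1\le i\le d,\ z_i<0}p_i^{-z_i},$$ and suppose $\|\mathbf{S}_1\mathbf{z}-\mathbf{t}\|_1\leq\varepsilon$. Then $$|u-kN|\leq\frac{\sqrt{N}}{C}\exp\left(\frac{\varepsilon}{2}\right).$$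
   Context: $\ln$ is the natural logarithm, $\|\cdot\|_1$ the $\ell^1$ norm; empty products equal $1$. *)

(* concrete reals R, integers Z. Indices are 0-based: i = 0..d-1. *)
From Stdlib Require Import Reals ZArith Znumtheory.
Open Scope R_scope.

Fixpoint sumR (n : nat) (f : nat -> R) : R :=
  match n with O => 0 | S m => sumR m f + f m end.

Fixpoint prodZ (n : nat) (f : nat -> Z) : Z :=
  match n with O => 1%Z | S m => (prodZ m f * f m)%Z end.

Definition first_primes (d : nat) (p : nat -> Z) : Prop :=
  (forall i, (i < d)%nat -> prime (p i)) /\
  (forall i j, (i < j)%nat -> (j < d)%nat -> (p i < p j)%Z) /\
  (forall q : Z, prime q -> (q <= p (d - 1)%nat)%Z ->
     exists i, (i < d)%nat /\ p i = q).

Definition S1 (d : nat) (C : R) (p : nat -> Z) (r c : nat) : R :=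
  if Nat.eqb r d then C * ln (IZR (p c))
  else if Nat.eqb r c then ln (IZR (p c)) else 0.

Definition tvec (d : nat) (C : R) (N : nat) (r : nat) : R :=
  if Nat.eqb r d then C * ln (INR N) else 0.

Definition matvec (n : nat) (M : nat -> nat -> R) (z : nat -> Z) (r : nat) : R :=
  sumR n (fun c => M r c * IZR (z c)).

Definition l1norm (m : nat) (v : nat -> R) : R := sumR m (fun r => Rabs (v r)).

Definition u_of (d : nat) (p : nat -> Z) (z : nat -> Z) : Z :=
  prodZ d (fun i => if Z.ltb 0 (z i) then (p i ^ z i)%Z else 1%Z).
Definition k_of (d : nat) (p : nat -> Z) (z : nat -> Z) : Z :=
  prodZ d (fun i => if Z.ltb (z i) 0 then (p i ^ (- z i))%Z else 1%Z).

(* Write u = exp a and k = exp b, where a and b collect the positive and the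
   negative parts of z_i ln p_i, and put x = a - b - ln N.  The first d rows of
   the residual S_1 z - t contribute a + b to its l1 norm and the last row
   contributes C|x|.  Then |u - kN| = kN |e^x - 1| = 2 kN e^{x/2} sinh(|x|/2),
   and the convexity estimate C sinh y <= sinh (C y) <= e^{Cy}/2 for y >= 0
   gives C |u - kN| <= sqrt N exp ((a + b + C|x|)/2) <= sqrt N exp (eps/2). *)

From Stdlib Require Import Reals ZArith Znumtheory Lra Lia.
From Coquelicot Require Import Coquelicot.
Open Scope R_scope.

Lemma sinh_opp x : sinh (- x) = - sinh x.
Proof. unfold sinh; rewrite Ropp_involutive; field. Qed.

Lemma sinh_ge0 x : 0 <= x -> 0 <= sinh x.
Proof.
  intros Hx; rewrite <- sinh_0.
  destruct (Req_dec x 0) as [-> | Hx0]; [lra | left; apply sinh_lt; lra].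
Qed.

Lemma Rabs_sinh x : Rabs (sinh x) = sinh (Rabs x).
Proof.
  destruct (Rle_or_lt 0 x) as [Hx | Hx].
  - rewrite !Rabs_right; [reflexivity | lra |]. apply Rle_ge, sinh_ge0, Hx.
  - rewrite (Rabs_left x Hx), sinh_opp, Rabs_left1; [reflexivity |].
    pose proof (sinh_ge0 (- x)) as H; rewrite sinh_opp in H; lra.
Qed.

Lemma cosh_le b a : 0 <= b <= a -> cosh b <= cosh a.
Proof.
  intros [Hb Hba]; unfold cosh.
  assert (E : exp a + exp (- a) - (exp b + exp (- b))
              = (exp a - exp b) * (1 - exp (- (a + b)))).
  { rewrite Ropp_plus_distr, exp_plus, !exp_Ropp.
    pose proof (exp_pos a); pose proof (exp_pos b); field; lra. }
  assert (exp b <= exp a).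
  { destruct (Req_dec a b) as [-> | ]; [lra | left; apply exp_increasing; lra]. }
  assert (exp (- (a + b)) <= 1).
  { rewrite <- exp_0.
    destruct (Req_dec (a + b) 0) as [-> | ]; [rewrite Ropp_0; lra |].
    left; apply exp_increasing; lra. }
  nra.
Qed.

(* t |-> sinh (C t) - C sinh t vanishes at 0 and has derivative
   C (cosh (C t) - cosh t) >= 0 on [0, +oo). *)
Lemma sinh_scale_le C y : 1 <= C -> 0 <= y -> C * sinh y <= sinh (C * y).
Proof.
  intros HC Hy.
  destruct (Req_dec y 0) as [-> | Hy0].
  { rewrite Rmult_0_r, sinh_0; lra. }
  set (h := fun t => sinh (C * t) - C * sinh t).
  set (dh := fun t => C * (cosh (C * t) - cosh t)).
  destruct (MVT_cor2 h dh 0 y) as [c [Hmvt Hc]]; [lra | |].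
  { intros c _; apply is_derive_Reals; unfold h, dh, sinh, cosh.
    auto_derive; [exact I | field]. }
  assert (0 <= dh c).
  { unfold dh; apply Rmult_le_pos; [lra |].
    assert (cosh c <= cosh (C * c)) by (apply cosh_le; nra); lra. }
  assert (h 0 = 0) by (unfold h; rewrite Rmult_0_r, sinh_0; ring).
  assert (0 <= h y) by nra.
  unfold h in *; lra.
Qed.

Lemma two_sinh_le_exp y : 2 * sinh y <= exp y.
Proof. unfold sinh; pose proof (exp_pos (- y)); lra. Qed.

Lemma exp_sub_1_sinh x : exp x - 1 = 2 * exp (x / 2) * sinh (x / 2).
Proof.
  unfold sinh.
  replace (2 * exp (x / 2) * ((exp (x / 2) - exp (- (x / 2))) / 2))
    with (exp (x / 2 + x / 2) - exp (x / 2 + - (x / 2)))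
    by (rewrite !exp_plus; field).
  replace (x / 2 + x / 2) with x by field.
  now rewrite Rplus_opp_r, exp_0.
Qed.

Lemma Rabs_exp_sub_1_le C x :
  1 <= C -> C * Rabs (exp x - 1) <= exp (x / 2) * exp (C * Rabs x / 2).
Proof.
  intros HC.
  rewrite exp_sub_1_sinh, !Rabs_mult, Rabs_sinh, (Rabs_right 2), Rabs_right
    by (try apply Rle_ge, Rlt_le, exp_pos; lra).
  replace (Rabs (x / 2)) with (Rabs x / 2)
    by (unfold Rdiv; rewrite Rabs_mult, (Rabs_right (/ 2)); lra).
  pose proof (sinh_scale_le C (Rabs x / 2) HC ltac:(pose proof (Rabs_pos x); lra)).
  pose proof (two_sinh_le_exp (C * (Rabs x / 2))).
  pose proof (exp_pos (x / 2)).
  replace (C * Rabs x / 2) with (C * (Rabs x / 2)) by field.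
  nra.
Qed.

Lemma sqrt_exp x : sqrt (exp x) = exp (x / 2).
Proof.
  rewrite <- (sqrt_square (exp (x / 2))) by (left; apply exp_pos).
  rewrite <- exp_plus; f_equal; f_equal; field.
Qed.

Lemma Rabs_exp_sub_le a b L C eps :
  1 <= C -> a + b + C * Rabs (a - b - L) <= eps ->
  Rabs (exp a - exp b * exp L) <= sqrt (exp L) / C * exp (eps / 2).
Proof.
  intros HC Heps.
  set (x := a - b - L) in Heps.
  replace (exp a - exp b * exp L) with (exp (b + L) * (exp x - 1))
    by (rewrite Rmult_minus_distr_l, <- !exp_plus; unfold x; f_equal; [f_equal | ]; ring).
  rewrite Rabs_mult, (Rabs_right (exp (b + L))), sqrt_exp
    by (left; apply exp_pos).
  pose proof (Rabs_exp_sub_1_le C x HC) as Hx.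
  assert (Hcollect : exp (b + L) * (exp (x / 2) * exp (C * Rabs x / 2))
                     = exp (L / 2) * exp ((a + b + C * Rabs x) / 2)).
  { rewrite <- !exp_plus; f_equal; unfold x; field. }
  assert (exp ((a + b + C * Rabs x) / 2) <= exp (eps / 2)).
  { destruct (Req_dec (a + b + C * Rabs x) eps) as [-> | ]; [lra |].
    left; apply exp_increasing; lra. }
  pose proof (exp_pos (b + L)); pose proof (exp_pos (L / 2)).
  apply Rmult_le_reg_l with C; [lra |].
  replace (C * (exp (L / 2) / C * exp (eps / 2))) with (exp (L / 2) * exp (eps / 2))
    by (field; lra).
  nra.
Qed.

Lemma Rabs_Rmax_split x : Rabs x = Rmax 0 x + Rmax 0 (- x).
Proof.
  destruct (Rle_or_lt 0 x).
  - rewrite Rabs_right, Rmax_right, Rmax_left; lra.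
  - rewrite Rabs_left, Rmax_left, Rmax_right; lra.
Qed.

Lemma Rmax_split x : x = Rmax 0 x - Rmax 0 (- x).
Proof.
  destruct (Rle_or_lt 0 x).
  - rewrite Rmax_right, Rmax_left; lra.
  - rewrite Rmax_left, Rmax_right; lra.
Qed.

Lemma sumR_ext n f g :
  (forall i, (i < n)%nat -> f i = g i) -> sumR n f = sumR n g.
Proof.
  induction n as [| n IH]; intros H; simpl; [reflexivity |].
  rewrite IH by (intros; apply H; lia).
  rewrite H by lia; reflexivity.
Qed.

Lemma sumR_plus n f g : sumR n (fun i => f i + g i) = sumR n f + sumR n g.
Proof. induction n as [| n IH]; simpl; [ring | rewrite IH; ring]. Qed.

Lemma sumR_minus n f g : sumR n (fun i => f i - g i) = sumR n f - sumR n g.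
Proof. induction n as [| n IH]; simpl; [ring | rewrite IH; ring]. Qed.

Lemma sumR_mult_l n c f : sumR n (fun i => c * f i) = c * sumR n f.
Proof. induction n as [| n IH]; simpl; [ring | rewrite IH; ring]. Qed.

Lemma sumR_delta n r f :
  (r < n)%nat -> sumR n (fun c => if Nat.eqb r c then f c else 0) = f r.
Proof.
  induction n as [| n IH]; intros Hr; [lia |]; simpl.
  destruct (Nat.eqb_spec r n) as [-> | Hrn].
  - rewrite (sumR_ext n _ (fun c => 0 * f c)), sumR_mult_l; [ring |].
    intros c Hc; destruct (Nat.eqb_spec n c); [lia | ring].
  - rewrite IH by lia; ring.
Qed.

Lemma IZR_prodZ_exp n f g :
  (forall i, (i < n)%nat -> IZR (f i) = exp (g i)) ->
  IZR (prodZ n f) = exp (sumR n g).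
Proof.
  induction n as [| n IH]; intros H; simpl; [now rewrite exp_0 |].
  rewrite mult_IZR, IH by (intros; apply H; lia).
  rewrite H, exp_plus by lia; reflexivity.
Qed.

Lemma IZR_pow_exp (p e : Z) :
  (0 < p)%Z -> (0 <= e)%Z -> IZR (p ^ e) = exp (IZR e * ln (IZR p)).
Proof.
  intros Hp He.
  rewrite <- (Z2Nat.id e) at 1 by lia.
  rewrite <- pow_IZR, <- Rpower_pow by (apply IZR_lt; lia).
  unfold Rpower; rewrite INR_IZR_INZ, Z2Nat.id by lia; reflexivity.
Qed.

Lemma IZR_pos_part_pow (p e : Z) :
  (1 <= p)%Z ->
  IZR (if Z.ltb 0 e then p ^ e else 1)%Z = exp (Rmax 0 (IZR e * ln (IZR p))).
Proof.
  intros Hp.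
  assert (Hln : 0 <= ln (IZR p)) by (rewrite <- ln_1; apply ln_le; [lra | apply IZR_le; lia]).
  destruct (Z.ltb_spec 0 e) as [He | He].
  - rewrite Rmax_right, IZR_pow_exp by (try apply Rmult_le_pos, Hln; try apply IZR_le; lia).
    reflexivity.
  - rewrite Rmax_left, exp_0; [reflexivity |].
    assert (IZR e <= 0) by (apply IZR_le; lia); nra.
Qed.

Section LogCoordinates.

Variables (d : nat) (p : nat -> Z) (z : nat -> Z).
Hypothesis p_ge1 : forall i, (i < d)%nat -> (1 <= p i)%Z.

Let g (i : nat) : R := IZR (z i) * ln (IZR (p i)).
Let log_u : R := sumR d (fun i => Rmax 0 (g i)).
Let log_k : R := sumR d (fun i => Rmax 0 (- g i)).

Lemma IZR_u_of : IZR (u_of d p z) = exp log_u.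
Proof.
  apply IZR_prodZ_exp; intros i Hi; apply IZR_pos_part_pow, p_ge1, Hi.
Qed.

Lemma IZR_k_of : IZR (k_of d p z) = exp log_k.
Proof.
  apply IZR_prodZ_exp; intros i Hi.
  replace (Z.ltb (z i) 0) with (Z.ltb 0 (- z i))
    by (destruct (Z.ltb_spec (z i) 0), (Z.ltb_spec 0 (- z i)); lia).
  rewrite IZR_pos_part_pow by (apply p_ge1, Hi).
  unfold g; rewrite opp_IZR, Ropp_mult_distr_l; reflexivity.
Qed.

Lemma matvec_S1_lt C r :
  (r < d)%nat -> matvec d (S1 d C p) z r = g r.
Proof.
  intros Hr; unfold matvec, S1.
  rewrite <- (sumR_delta d r g Hr).
  apply sumR_ext; intros c _.
  rewrite (proj2 (Nat.eqb_neq r d)) by lia.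
  destruct (Nat.eqb_spec r c) as [-> | ]; unfold g; ring.
Qed.

Lemma matvec_S1_last C : matvec d (S1 d C p) z d = C * sumR d g.
Proof.
  unfold matvec, S1; rewrite Nat.eqb_refl, <- sumR_mult_l.
  apply sumR_ext; intros c _; unfold g; ring.
Qed.

Lemma l1norm_S1_residual C N :
  0 <= C ->
  l1norm (S d) (fun r => matvec d (S1 d C p) z r - tvec d C N r)
  = log_u + log_k + C * Rabs (log_u - log_k - ln (INR N)).
Proof.
  intros HC; unfold l1norm, log_u, log_k; simpl.
  rewrite <- sumR_plus, <- sumR_minus.
  rewrite (sumR_ext d (fun i => _ - _) g) by (intros i _; symmetry; apply Rmax_split).
  rewrite matvec_S1_last; unfold tvec; rewrite Nat.eqb_refl.
  rewrite <- Rmult_minus_distr_l, Rabs_mult, (Rabs_right C) by lra.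
  f_equal; apply sumR_ext; intros r Hr.
  rewrite matvec_S1_lt, (proj2 (Nat.eqb_neq r d)), Rminus_0_r by lia.
  apply Rabs_Rmax_split.
Qed.

End LogCoordinates.

Theorem lemma2 (d : nat) (p : nat -> Z) (N : nat) (C eps : R) (z : nat -> Z) :
  (1 <= d)%nat ->
  first_primes d p ->
  (1 <= N)%nat ->
  1 < C ->
  l1norm (S d) (fun r => matvec d (S1 d C p) z r - tvec d C N r) <= eps ->
  Rabs (IZR (u_of d p z) - IZR (k_of d p z) * INR N)
    <= sqrt (INR N) / C * exp (eps / 2).
Proof.
  intros _ [Hprime _] HN HC Hnorm.
  assert (Hp : forall i, (i < d)%nat -> (1 <= p i)%Z).
  { intros i Hi; pose proof (prime_ge_2 _ (Hprime i Hi)); lia. }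
  assert (HNpos : 0 < INR N) by (apply lt_0_INR; lia).
  rewrite (IZR_u_of d p z Hp), (IZR_k_of d p z Hp), <- (exp_ln (INR N) HNpos).
  apply Rabs_exp_sub_le; [lra |].
  rewrite <- (l1norm_S1_residual d p z C N) by lra.
  exact Hnorm.
Qed.
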